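(* Let $N\ge 3$ and let $G$ be the graph on vertices $\{u_{1j},b_{1j},u_{2j}: j\in[N]\}$ whose fractional stable set polytope $QSTAB(G)\subseteq\mathbb R^{3N}$ is given by: $u_{1j},b_{1j},u_{2j}\ge0$ for $j\in[N]$; $b_{1j}+\sum_{k=1}^N u_{1k}\le1$ for $j\in[N]$; $\sum_{j=1}^N u_{2j}\le1$; $u_{1j}+u_{2j}+b_{1j}\le1$ for $j\in[N]$. Let $O=[N]$. For every $U\subseteq O$ with $2\le|U|\le N-1$, every $m\in O\setminus U$ and every $V$ with $U\subseteq V\subseteq O$, the vector $\mathbf v(m,U,V)$ with $u_{1m}=|U|^{-1}$, $b_{1j}=1-|U|^{-1}$ for $j\in V$, $u_{2j}=|U|^{-1}$ for $j\in U$, and all other coordinates $0$, is an extreme point of $QSTAB(G)$.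
   Context: $G$ is the enhanced conflict graph of a $2\times N$ switch whose traffic consists of unicasts from input 1 to each output $j$ ($u_{1j}$), a broadcast from input 1 to all outputs (subflows $b_{1j}$), and unicasts from input 2 to each output $j$ ($u_{2j}$); its edges are: $u_{1j}\sim u_{1k}$ and $u_{2j}\sim u_{2k}$ for $j\ne k$; $b_{1j}\sim u_{1k}$ for all $j,k$; and $u_{1j}\sim u_{2j}$, $u_{2j}\sim b_{1j}$ for all $j$. $QSTAB(G)$ is the set of nonnegative vectors satisfying all clique inequalities, which for this graph are the inequalities listed. *)

From HB Require Import structures.
From mathcomp Require Import all_boot all_order all_algebra.
Set Implicit Arguments. Unset Strict Implicit. Unset Printing Implicit Defensive.
Import Order.TTheory GRing.Theory Num.Theory.
Local Open Scope ring_scope.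

(* A point of R^{3N}: coordinates indexed by (kind, j) with kind in 'I_3:
   kind 0 = u_{1j}, kind 1 = b_{1j}, kind 2 = u_{2j}. *)
Notation pt R N := {ffun 'I_3 * 'I_N -> R}.

Definition kU1 : 'I_3 := @Ordinal 3 0 erefl.
Definition kB1 : 'I_3 := @Ordinal 3 1 erefl.
Definition kU2 : 'I_3 := @Ordinal 3 2 erefl.

Definition u1 {R : realFieldType} {N} (x : pt R N) (j : 'I_N) := x (kU1, j).
Definition b1 {R : realFieldType} {N} (x : pt R N) (j : 'I_N) := x (kB1, j).
Definition u2 {R : realFieldType} {N} (x : pt R N) (j : 'I_N) := x (kU2, j).

Definition QSTAB {R : realFieldType} {N} (x : pt R N) : Prop :=
  [/\ (forall c j, 0 <= x (c, j)),
      (forall j, b1 x j + \sum_(k < N) u1 x k <= 1),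
      \sum_(j < N) u2 x j <= 1
    & (forall j, u1 x j + u2 x j + b1 x j <= 1)].

Definition extreme_point {R : realFieldType} {N} (P : pt R N -> Prop) (x : pt R N) : Prop :=
  P x /\ forall (y z : pt R N) (t : R), P y -> P z -> 0 < t -> t < 1 ->
    (forall i, x i = t * y i + (1 - t) * z i) -> y = z.

Definition vmUV {R : realFieldType} {N} (m : 'I_N) (U V : {set 'I_N}) : pt R N :=
  [ffun cj : 'I_3 * 'I_N =>
     let c := cj.1 in let j := cj.2 in
     if c == kU1 then (if j == m then (#|U|%:R)^-1 else 0)
     else if c == kB1 then (if j \in V then 1 - (#|U|%:R)^-1 else 0)
     else (if j \in U then (#|U|%:R)^-1 else 0) : R].

(** The point v = v(m,U,V) is extreme because it is the unique point of
    QSTAB(G) satisfying with equality every inequality that is tight at v.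
    Tightness passes from a point to both ends of any open segment through it
    inside the polytope.  Tightness at v kills every coordinate outside the
    support; the clique inequalities [b_{1j} + sum_k u_{1k} <= 1] (j in V) and
    [u_{1j} + u_{2j} + b_{1j} <= 1] (j in U) then force [u_{2j} = u_{1m}] on U,
    and [sum_j u_{2j} = 1] pins [u_{1m}] to [|U|^-1]. *)

From HB Require Import structures.
From mathcomp Require Import all_boot all_order all_algebra.
From mathcomp Require Import ring lra.

Set Implicit Arguments.
Unset Strict Implicit.
Unset Printing Implicit Defensive.
Import Order.TTheory GRing.Theory Num.Theory.
Local Open Scope ring_scope.

Section ConvexCombination.
Variables (R : realFieldType) (t : R).
Hypotheses (t_gt0 : 0 < t) (t_lt1 : t < 1).

Lemma convex_comb_eq_ub (c x y z : R) :
  x = t * y + (1 - t) * z -> y <= c -> z <= c -> x = c -> y = c.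
Proof. by move: t_gt0 t_lt1 => t0 t1 -> yc zc xc; nra. Qed.

Lemma convex_comb_eq_lb (c x y z : R) :
  x = t * y + (1 - t) * z -> c <= y -> c <= z -> x = c -> y = c.
Proof. by move: t_gt0 t_lt1 => t0 t1 -> cy cz xc; nra. Qed.

Lemma sum_convex_comb (I : finType) (F G H : I -> R) :
  (forall i, F i = t * G i + (1 - t) * H i) ->
  \sum_i F i = t * \sum_i G i + (1 - t) * \sum_i H i.
Proof. by move=> FGH; rewrite (eq_bigr _ (fun i _ => FGH i)) big_split -!mulr_sumr. Qed.

End ConvexCombination.

Lemma kind_cases (c : 'I_3) : [\/ c = kU1, c = kB1 | c = kU2].
Proof. by case: c => -[|[|[|//]]] ?; [apply: Or31 | apply: Or32 | apply: Or33]; apply: val_inj. Qed.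

Lemma sum_indicator (R : realFieldType) (I : finType) (A : {set I}) (a : R) :
  \sum_i (if i \in A then a else 0) = #|A|%:R * a.
Proof. by rewrite -big_mkcond sumr_const mulr_natl. Qed.

Section Tightness.
Variables (R : realFieldType) (N : nat).
Implicit Types x y z : pt R N.

Definition QSTAB_tight x y : Prop :=
  [/\ (forall i, x i = 0 -> y i = 0),
      (forall j, b1 x j + \sum_(k < N) u1 x k = 1 ->
                 b1 y j + \sum_(k < N) u1 y k = 1),
      (\sum_(j < N) u2 x j = 1 -> \sum_(j < N) u2 y j = 1)
    & (forall j, u1 x j + u2 x j + b1 x j = 1 -> u1 y j + u2 y j + b1 y j = 1)].

Lemma QSTAB_convex_tight x y z (t : R) : QSTAB y -> QSTAB z -> 0 < t -> t < 1 ->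
  (forall i, x i = t * y i + (1 - t) * z i) -> QSTAB_tight x y.
Proof.
move=> [y0 yb yu2 yc] [z0 zb zu2 zc] t0 t1 xyz.
have sum_xyz c : \sum_(k < N) x (c, k) =
    t * \sum_(k < N) y (c, k) + (1 - t) * \sum_(k < N) z (c, k).
  exact: sum_convex_comb (fun k => xyz (c, k)).
split.
- by move=> [c j]; apply: (convex_comb_eq_lb t0 t1 (xyz (c, j)) (y0 c j) (z0 c j)).
- move=> j; apply: (convex_comb_eq_ub t0 t1 _ (yb j) (zb j)).
  by rewrite /b1 /u1 sum_xyz xyz; ring.
- exact: (convex_comb_eq_ub t0 t1 (sum_xyz kU2) yu2 zu2).
- move=> j; apply: (convex_comb_eq_ub t0 t1 _ (yc j) (zc j)).
  by rewrite /b1 /u1 /u2 !xyz; ring.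
Qed.

Variables (U V : {set 'I_N}) (m : 'I_N).
Hypotheses (U_gt1 : (2 <= #|U|)%N) (mU : m \notin U) (UV : U \subset V).

Let a : R := #|U|%:R^-1.
Let v : pt R N := vmUV m U V.

Let U_neq0 : #|U|%:R != 0 :> R.
Proof. by rewrite pnatr_eq0 -lt0n (leq_trans _ U_gt1). Qed.

Let neq_m j : j \in U -> j != m.
Proof. by move=> jU; apply: contraNneq mU => <-. Qed.

Lemma sum_u1_vmUV : \sum_(k < N) u1 v k = a.
Proof.
rewrite (bigD1 m) //= big1 ?addr0 /u1 ?ffunE /= ?eqxx // => j jm.
by rewrite ffunE /= (negbTE jm).
Qed.

Lemma sum_u2_vmUV : \sum_(j < N) u2 v j = 1.
Proof.
rewrite (eq_bigr (fun j => if j \in U then a else 0)) => [|j _]; last by rewrite /u2 ffunE.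
by rewrite sum_indicator mulfV.
Qed.

Lemma QSTAB_vmUV : QSTAB v.
Proof.
have a_ge0 : 0 <= a by rewrite invr_ge0 ler0n.
have a_le1 : a <= 1 by rewrite invf_le1 ?ler1n ?(leq_trans _ U_gt1) // ltr0n (leq_trans _ U_gt1).
split.
- move=> c j; rewrite ffunE /= -/a.
  by case: (kind_cases c) => ->; rewrite /=; repeat case: ifP => _ //; lra.
- move=> j; rewrite sum_u1_vmUV /b1 ffunE /= -/a; case: ifP => _; lra.
- by rewrite sum_u2_vmUV.
- move=> j; rewrite /b1 /u1 /u2 !ffunE /= -/a.
  case: eqP => [->|_]; first by rewrite (negbTE mU) addr0; case: ifP => _; lra.
  rewrite add0r; case: ifP => jU; first by rewrite (subsetP UV _ jU); lra.
  case: ifP => _; lra.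
Qed.

Lemma QSTAB_tight_vmUV y : QSTAB_tight v y -> y = v.
Proof.
move=> [y0 yb yu2 yc].
have u1_off j : j != m -> u1 y j = 0.
  by move=> jm; apply: y0; rewrite ffunE /= (negbTE jm).
have b1_off j : j \notin V -> b1 y j = 0.
  by move=> jV; apply: y0; rewrite ffunE /= (negbTE jV).
have u2_off j : j \notin U -> u2 y j = 0.
  by move=> jU; apply: y0; rewrite ffunE /= (negbTE jU).
have b1_on j : j \in V -> b1 y j + u1 y m = 1.
  move=> jV; have := yb j; rewrite sum_u1_vmUV /b1 ffunE /= jV subrK.
  by rewrite (bigD1 m) //= big1 ?addr0 => [/(_ erefl)|k /u1_off].
have u2_on j : j \in U -> u2 y j = u1 y m.
  move=> jU; have := yc j; rewrite /b1 /u1 /u2 !ffunE /= (negbTE (neq_m jU)) jU.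
  rewrite (subsetP UV _ jU) add0r subrKC => /(_ erefl).
  by have := b1_on j (subsetP UV _ jU); have := u1_off j (neq_m jU); rewrite /b1 /u1 /u2; lra.
have u1_m : u1 y m = a.
  apply: (mulfI U_neq0); rewrite mulfV //.
  have := yu2 sum_u2_vmUV; rewrite (bigID (mem U)) /= [X in _ + X]big1 => [|j /u2_off //].
  by rewrite addr0 (eq_bigr _ u2_on) sumr_const mulr_natl.
apply/ffunP => -[c j]; rewrite ffunE /= -/a.
case: (kind_cases c) => ->; rewrite /=.
- by case: eqP => [->|/eqP /u1_off]; [exact: u1_m|].
- case: ifP => jV; last by apply: b1_off; rewrite jV.
  by have := b1_on j jV; rewrite u1_m /b1; lra.
- case: ifP => jU; last by apply: u2_off; rewrite jU.
  by rewrite -u1_m -(u2_on j jU).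
Qed.

End Tightness.

Theorem theorem10 (R : realFieldType) (N : nat) (HN : (3 <= N)%N)
  (U V : {set 'I_N}) (m : 'I_N) :
  (2 <= #|U|)%N -> (#|U| <= N - 1)%N -> m \notin U -> U \subset V ->
  extreme_point (@QSTAB R N) (vmUV m U V).
Proof.
(* The bounds [3 <= N] and [#|U| <= N - 1] only ensure that such U and m exist. *)
move=> U_gt1 _ mU UV; split; first exact: QSTAB_vmUV.
move=> y z t Py Pz t0 t1 xyz.
have xzy i : vmUV m U V i = (1 - t) * z i + (1 - (1 - t)) * y i.
  by rewrite xyz; ring.
have -> := QSTAB_tight_vmUV U_gt1 mU UV (QSTAB_convex_tight Py Pz t0 t1 xyz).
have t'0 : 0 < 1 - t by lra.
have t'1 : 1 - t < 1 by lra.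
by rewrite (QSTAB_tight_vmUV U_gt1 mU UV (QSTAB_convex_tight Pz Py t'0 t'1 xzy)).
Qed.
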